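(* For every $\mathtt{PDL}$ sequent $\Gamma\Rightarrow\Delta$: if $\Gamma\Rightarrow\Delta$ is provable in $\mathtt{CGPDL}$, then $\Gamma\Rightarrow\Delta$ is valid.
   Context: $\mathtt{PDL}$ formulas/programs over sets $\mathsf{Prop}$, $\mathsf{AtProg}$: $\varphi ::= \bot \mid p \mid (\varphi\to\varphi) \mid [\pi]\varphi$, $\pi ::= \alpha \mid \pi;\pi \mid \pi\cup\pi \mid \pi^{*} \mid \varphi?$. $[\pi]\Gamma=\{[\pi]\varphi:\varphi\in\Gamma\}$. A model $M=(W,(R_\alpha),V)$: $W\neq\emptyset$, $R_\alpha\subseteq W\times W$, $V:W\to\mathcal P(\mathsf{Prop})$; $R_{\pi_0;\pi_1}$ composition, $R_{\pi_0\cup\pi_1}$ union, $R_{\pi^*}$ reflexive–transitive closure of $R_\pi$, $R_{\psi?}=\{(w,w):M,w\models\psi\}$; $\bot$ false, $p$ true at $w$ iff $p\in V(w)$, $\to$ classical, $[\pi]\varphi$ true at $w$ iff $\varphi$ true at all $v$ with $wR_\pi v$. A sequent $\Gamma\Rightarrow\Delta$ is a pair of finite sets of formulas; valid if in every model at every state where all of $\Gamma$ hold some formula of $\Delta$ holds. $\mathtt{CGPDL}$ rules (premises / conclusion): (Ax) / $\Gamma\Rightarrow\Delta$, $\Gamma\cap\Delta\neq\emptyset$; ($\bot$) / $\Gamma,\bot\Rightarrow\Delta$; ($\to$L) $\Gamma\Rightarrow\varphi,\Delta$ and $\Gamma,\psi\Rightarrow\Delta$ / $\Gamma,\varphi\to\psi\Rightarrow\Delta$;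 ($\to$R) $\Gamma,\varphi\Rightarrow\psi,\Delta$ / $\Gamma\Rightarrow\varphi\to\psi,\Delta$; (Wk) $\Gamma\Rightarrow\Delta$ / $\Gamma'\Rightarrow\Delta'$, $\Gamma\subseteq\Gamma'$, $\Delta\subseteq\Delta'$; (Cut) $\Gamma\Rightarrow\varphi,\Delta$ and $\Gamma,\varphi\Rightarrow\Delta$ / $\Gamma\Rightarrow\Delta$; (K) $\Gamma\Rightarrow\varphi$ / $\Gamma',[\pi]\Gamma\Rightarrow[\pi]\varphi,\Delta$; ($[;]$L) $\Gamma,[\pi_0][\pi_1]\varphi\Rightarrow\Delta$ / $\Gamma,[\pi_0;\pi_1]\varphi\Rightarrow\Delta$; ($[;]$R) $\Gamma\Rightarrow[\pi_0][\pi_1]\varphi,\Delta$ / $\Gamma\Rightarrow[\pi_0;\pi_1]\varphi,\Delta$; ($[\cup]$L) $\Gamma,[\pi_0]\varphi,[\pi_1]\varphi\Rightarrow\Delta$ / $\Gamma,[\pi_0\cup\pi_1]\varphi\Rightarrow\Delta$; ($[\cup]$R) $\Gamma\Rightarrow\Delta,[\pi_0]\varphi$ and $\Gamma\Rightarrow\Delta,[\pi_1]\varphi$ / $\Gamma\Rightarrow[\pi_0\cup\pi_1]\varphi,\Delta$; ($[*]$L) $\Gamma,\varphi,[\pi][\pi^*]\varphi\Rightarrow\Delta$ / $\Gamma,[\pi^*]\varphi\Rightarrow\Delta$; ($[?]$L) $\Gamma\Rightarrow\varphi,\Delta$ and $\Gamma,\psi\Rightarrow\Delta$ / $\Gamma,[\varphi?]\psi\Rightarrow\Delta$;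 ($[?]$R) $\Gamma,\varphi\Rightarrow\psi,\Delta$ / $\Gamma\Rightarrow[\varphi?]\psi,\Delta$; (C-s) $\Gamma\Rightarrow\varphi,\Delta$ and $\Gamma\Rightarrow[\pi][\pi^*]\varphi,\Delta$ / $\Gamma\Rightarrow[\pi^*]\varphi,\Delta$. A pre-proof is a finite tree of sequents built of rule instances whose leaves are Ax/$\bot$ instances or buds, with each bud assigned a companion (an inner node labelled with the same sequent); the derivation graph identifies each bud with its companion; a path is a sequence of nodes each a premise of the previous one's rule instance. A trace along a path $(\Gamma_i\Rightarrow\Delta_i)$ is a sequence $\tau_i\in\Delta_i$ such that: at ($\to$R), ($[;]$R), ($[\cup]$R), ($[?]$R), (C-s), either $\tau_{i+1}=\tau_i$ or $\tau_i$ is the principal formula and $\tau_{i+1}$ is its component in the chosen premise ($\psi$ for $\varphi\to\psi$; $[\pi_0][\pi_1]\varphi$ for $[\pi_0;\pi_1]\varphi$; $[\pi_j]\varphi$ for $[\pi_0\cup\pi_1]\varphi$ in the premise containing $[\pi_j]\varphi$; $\psi$ for $[\varphi?]\psi$; $\varphi$ or $[\pi][\pi^*]\varphi$ for $[\pi^*]\varphi$, the latter being a progress point); at (K), $\tau_i$ is the principal formula $[\pi]\varphi$ and $\tau_{i+1}=\varphi$; at all other rules, $\tau_{i+1}=\tau_i$. A $\mathtt{CGPDL}$ proof is a pre-proof in which every infinite path of the derivation graph has a tail followed by a trace with infinitely many progress points; provable means having such a proof with the sequent at the root. *)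

From Stdlib Require Import List Relations Arith.
Import ListNotations.
Set Implicit Arguments.

Inductive form (P A : Type) : Type :=
| Bot : form P A
| Var : P -> form P A
| Imp : form P A -> form P A -> form P A
| Box : prog P A -> form P A -> form P A
with prog (P A : Type) : Type :=
| Atom : A -> prog P A
| PSeq : prog P A -> prog P A -> prog P A
| PCup : prog P A -> prog P A -> prog P A
| PStar : prog P A -> prog P A
| PTest : form P A -> prog P A.

Arguments Bot {P A}.
Arguments Var {P A} _.
Arguments Imp {P A} _ _.
Arguments Box {P A} _ _.
Arguments Atom {P A} _.
Arguments PSeq {P A} _ _.
Arguments PCup {P A} _ _.
Arguments PStar {P A} _.
Arguments PTest {P A} _.

Record model (P A : Type) : Type := Model {
  world : Type;
  world_nonempty : inhabited world;
  acc : A -> world -> world -> Prop;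
  val : world -> P -> Prop
}.

Fixpoint sat {P A} (M : model P A) (w : world M) (f : form P A) {struct f} : Prop :=
  match f with
  | Bot => False
  | Var p => val M w p
  | Imp f g => sat M w f -> sat M w g
  | Box a g => forall v, rel M a w v -> sat M v g
  end
with rel {P A} (M : model P A) (a : prog P A) {struct a} : world M -> world M -> Prop :=
  match a with
  | Atom x => acc M x
  | PSeq a b => fun w u => exists v, rel M a w v /\ rel M b v u
  | PCup a b => fun w v => rel M a w v \/ rel M b w v
  | PStar a => clos_refl_trans (world M) (rel M a)
  | PTest f => fun w v => w = v /\ sat M w f
  end.

(* ---------- Sequents (pairs of finite sets, represented by lists) ---------- *)
Record sequent (P A : Type) : Type := Sq { ant : list (form P A); suc : list (form P A) }.
Arguments Sq {P A} _ _.

Definition eqset {T} (l1 l2 : list T) : Prop := forall x, In x l1 <-> In x l2.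
Definition seq_eq {P A} (s t : sequent P A) : Prop :=
  eqset (ant s) (ant t) /\ eqset (suc s) (suc t).

Definition valid {P A} (s : sequent P A) : Prop :=
  forall (M : model P A) (w : world M),
    (forall f, In f (ant s) -> sat M w f) -> exists g, In g (suc s) /\ sat M w g.

Inductive rule (P A : Type) : Type :=
| RAx | RBotL | RImpL (f g : form P A) | RImpR (f g : form P A) | RWk
| RCut (f : form P A) | RK (a : prog P A) (f : form P A)
| RSeqL (a b : prog P A) (f : form P A) | RSeqR (a b : prog P A) (f : form P A)
| RCupL (a b : prog P A) (f : form P A) | RCupR (a b : prog P A) (f : form P A)
| RStarL (a : prog P A) (f : form P A)
| RTestL (f g : form P A) | RTestR (f g : form P A)
| RCs (a : prog P A) (f : form P A).
Arguments RAx {P A}. Arguments RBotL {P A}. Arguments RWk {P A}.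

(* rule instances with literal premises/conclusion; "Gamma, phi" is phi :: Gamma *)
Inductive inst0 {P A} : rule P A -> list (sequent P A) -> sequent P A -> Prop :=
| I_Ax G D f : In f G -> In f D -> inst0 RAx [] (Sq G D)
| I_Bot G D : inst0 RBotL [] (Sq (Bot :: G) D)
| I_ImpL G D f g :
    inst0 (RImpL f g) [Sq G (f :: D); Sq (g :: G) D] (Sq (Imp f g :: G) D)
| I_ImpR G D f g : inst0 (RImpR f g) [Sq (f :: G) (g :: D)] (Sq G (Imp f g :: D))
| I_Wk G D G' D' : incl G G' -> incl D D' -> inst0 RWk [Sq G D] (Sq G' D')
| I_Cut G D f : inst0 (RCut f) [Sq G (f :: D); Sq (f :: G) D] (Sq G D)
| I_K G G' D a f : inst0 (RK a f) [Sq G [f]] (Sq (G' ++ map (Box a) G) (Box a f :: D))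
| I_SeqL G D a b f :
    inst0 (RSeqL a b f) [Sq (Box a (Box b f) :: G) D] (Sq (Box (PSeq a b) f :: G) D)
| I_SeqR G D a b f :
    inst0 (RSeqR a b f) [Sq G (Box a (Box b f) :: D)] (Sq G (Box (PSeq a b) f :: D))
| I_CupL G D a b f :
    inst0 (RCupL a b f) [Sq (Box a f :: Box b f :: G) D] (Sq (Box (PCup a b) f :: G) D)
| I_CupR G D a b f :
    inst0 (RCupR a b f) [Sq G (Box a f :: D); Sq G (Box b f :: D)]
          (Sq G (Box (PCup a b) f :: D))
| I_StarL G D a f :
    inst0 (RStarL a f) [Sq (f :: Box a (Box (PStar a) f) :: G) D]
          (Sq (Box (PStar a) f :: G) D)
| I_TestL G D f g :
    inst0 (RTestL f g) [Sq G (f :: D); Sq (g :: G) D] (Sq (Box (PTest f) g :: G) D)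
| I_TestR G D f g :
    inst0 (RTestR f g) [Sq (f :: G) (g :: D)] (Sq G (Box (PTest f) g :: D))
| I_Cs G D a f :
    inst0 (RCs a f) [Sq G (f :: D); Sq G (Box a (Box (PStar a) f) :: D)]
          (Sq G (Box (PStar a) f :: D)).

(* instances up to equality of sequents as pairs of sets *)
Definition inst {P A} (r : rule P A) (ps : list (sequent P A)) (c : sequent P A) : Prop :=
  exists ps' c', Forall2 seq_eq ps ps' /\ seq_eq c c' /\ inst0 r ps' c'.

(* allowed trace step at rule r, going from the conclusion to premise number j
   (0-based, in the order the premises are listed above) *)
Definition tstep {P A} (r : rule P A) (j : nat) (t t' : form P A) : Prop :=
  match r with
  | RImpR f g => t' = t \/ (t = Imp f g /\ t' = g)
  | RSeqR a b f => t' = t \/ (t = Box (PSeq a b) f /\ t' = Box a (Box b f))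
  | RCupR a b f => t' = t \/
      (t = Box (PCup a b) f /\ ((j = 0 /\ t' = Box a f) \/ (j = 1 /\ t' = Box b f)))
  | RTestR f g => t' = t \/ (t = Box (PTest f) g /\ t' = g)
  | RCs a f => t' = t \/
      (t = Box (PStar a) f /\ ((j = 0 /\ t' = f) \/ (j = 1 /\ t' = Box a (Box (PStar a) f))))
  | RK a f => t = Box a f /\ t' = f
  | _ => t' = t
  end.

Definition progress {P A} (r : rule P A) (j : nat) (t t' : form P A) : Prop :=
  exists a f, r = RCs a f /\ j = 1 /\ t = Box (PStar a) f /\ t' = Box a (Box (PStar a) f).

(* finite trees: inner/axiom nodes labelled by a sequent and a rule, and buds
   carrying the address of their companion (addresses = lists of child indices) *)
Inductive ptree (P A : Type) : Type :=
| PNode : sequent P A -> rule P A -> list (ptree P A) -> ptree P A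
| PBud : sequent P A -> list nat -> ptree P A.
Arguments PNode {P A} _ _ _.
Arguments PBud {P A} _ _.

Definition label {P A} (t : ptree P A) : sequent P A :=
  match t with PNode s _ _ => s | PBud s _ => s end.

Fixpoint subtree {P A} (t : ptree P A) (a : list nat) : option (ptree P A) :=
  match a with
  | [] => Some t
  | j :: a' =>
      match t with
      | PNode _ _ ch => match nth_error ch j with Some t' => subtree t' a' | None => None end
      | PBud _ _ => None
      end
  end.

Definition preproof {P A} (T : ptree P A) : Prop :=
  (* every non-bud node is an instance of a rule (nodes without children are
     thus exactly Ax / bot instances) *)
  (forall a s r ch, subtree T a = Some (PNode s r ch) -> inst r (map label ch) s) /\
  (forall a s c, subtree T a = Some (PBud s c) ->
     exists s' r' ch', subtree T c = Some (PNode s' r' ch') /\ ch' <> [] /\ seq_eq s s').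

(* edges of the derivation graph: from node a to its j-th premise, buds being
   identified with their companions *)
Definition dstep {P A} (T : ptree P A) (a : list nat) (j : nat) (b : list nat) : Prop :=
  exists s r ch child,
    subtree T a = Some (PNode s r ch) /\ nth_error ch j = Some child /\
    match child with
    | PNode _ _ _ => b = a ++ [j]
    | PBud _ c => b = c
    end.

Definition node_rule {P A} (T : ptree P A) (a : list nat) (r : rule P A) : Prop :=
  exists s ch, subtree T a = Some (PNode s r ch).

Definition in_succ {P A} (T : ptree P A) (a : list nat) (f : form P A) : Prop :=
  exists t, subtree T a = Some t /\ In f (suc (label t)).

(* global soundness condition: every infinite path (given by its nodes p i and
   the chosen premise indices js i) has a tail followed by a trace with
   infinitely many progress points *)
Definition cgpdl_proof {P A} (T : ptree P A) : Prop :=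
  preproof T /\
  forall (p : nat -> list nat) (js : nat -> nat),
    (forall i, dstep T (p i) (js i) (p (S i))) ->
    exists (n : nat) (tau : nat -> form P A),
      (forall i, n <= i -> in_succ T (p i) (tau i)) /\
      (forall i, n <= i -> exists r, node_rule T (p i) r /\ tstep r (js i) (tau i) (tau (S i))) /\
      (forall m, exists k, m <= k /\ n <= k /\
         exists r, node_rule T (p k) r /\ progress r (js k) (tau k) (tau (S k))).

Definition provable {P A} (s : sequent P A) : Prop :=
  exists T : ptree P A, cgpdl_proof T /\ seq_eq (label T) s.

(* Suppose the root sequent fails at some world.  Every rule instance whose
   conclusion fails at a world has a premise failing at some (possibly other)
   world, so following failing premises yields an infinite path of the
   derivation graph, along which some trace progresses infinitely often.  Rank a
   false formula by the least number of star iterations in a witness of its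
   falsity: along the trace the rank never increases, since the failing premise
   is chosen according to a least witness of the principal formula, and it
   strictly decreases at each progress point, where a witness for [[a*]f] that
   iterates at least once unfolds to a cheaper witness for [[a][a*]f].  This is
   an infinite descent in [nat]. *)
From Stdlib Require Import List Relations Arith Lia Classical ClassicalEpsilon.
Import ListNotations.

Lemma Forall2_nth_error_r {X Y} {R : X -> Y -> Prop} {l1 l2 j y} :
  Forall2 R l1 l2 -> nth_error l2 j = Some y -> exists x, nth_error l1 j = Some x /\ R x y.
Proof.
  intros H. revert j. induction H as [|x y' l1 l2 Hxy _ IH]; intros [|j] Hj;
    simpl in *; try discriminate.
  - injection Hj as <-. eauto.
  - eauto.
Qed.

Lemma seq_eq_sym {P A} {s t : sequent P A} : seq_eq s t -> seq_eq t s.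
Proof. intros [Ha Hs]. split; intro x; [rewrite (Ha x)|rewrite (Hs x)]; tauto. Qed.

Lemma nat_sequence_no_infinite_descent (u : nat -> nat) n :
  (forall i, n <= i -> u (S i) <= u i) ->
  (forall m, exists k, m <= k /\ n <= k /\ u (S k) < u k) -> False.
Proof.
  intros Hmono Hdrop.
  assert (Hle : forall d i, n <= i -> u (d + i) <= u i).
  { induction d as [|d IH]; intros i Hi; simpl; [lia|].
    specialize (Hmono (d + i)). specialize (IH i Hi). lia. }
  assert (Hbound : forall K i, n <= i -> u i <= K -> False).
  { induction K as [|K IH]; intros i Hi HK;
      destruct (Hdrop i) as [k [Hik [Hnk Hk]]];
      specialize (Hle (k - i) i Hi); replace (k - i + i) with k in Hle by lia.
    - lia.
    - apply (IH (S k)); lia. }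
  exact (Hbound (u n) n (le_n n) (le_n _)).
Qed.

Lemma infinite_run {X L : Type} {I : X -> Prop} {step : X -> L -> X -> Prop} {x0} :
  I x0 -> (forall x, I x -> exists l y, step x l y /\ I y) ->
  exists (p : nat -> X) (ls : nat -> L), forall i, step (p i) (ls i) (p (S i)).
Proof.
  intros H0 Hstep.
  assert (next : forall x : {x | I x}, {ly : L * X | step (proj1_sig x) (fst ly) (snd ly) /\ I (snd ly)}).
  { intros [x Hx]. apply constructive_indefinite_description.
    destruct (Hstep x Hx) as [l [y Hy]]. now exists (l, y). }
  pose (run := fix run (i : nat) : {x | I x} :=
    match i with
    | 0 => exist I x0 H0
    | S i => exist I (snd (proj1_sig (next (run i)))) (proj2 (proj2_sig (next (run i))))
    end).
  exists (fun i => proj1_sig (run i)), (fun i => fst (proj1_sig (next (run i)))).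
  intro i. exact (proj1 (proj2_sig (next (run i)))).
Qed.

Section Soundness.
Context {P A : Type} (M : model P A).

(* The index [n] counts the iterations of starred programs used by the witness. *)
Inductive refute : world M -> form P A -> nat -> Prop :=
| refute_bot w : refute w Bot 0
| refute_var w p : ~ val M w p -> refute w (Var p) 0
| refute_imp w f g n : sat M w f -> refute w g n -> refute w (Imp f g) n
| refute_box w v a f m n : reach a w v m -> refute v f n -> refute w (Box a f) (m + n)
with reach : prog P A -> world M -> world M -> nat -> Prop :=
| reach_atom x w v : acc M x w v -> reach (Atom x) w v 0
| reach_seq a b w v u m n : reach a w v m -> reach b v u n -> reach (PSeq a b) w u (m + n)
| reach_cupl a b w v n : reach a w v n -> reach (PCup a b) w v n
| reach_cupr a b w v n : reach b w v n -> reach (PCup a b) w v n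
| reach_test f w : sat M w f -> reach (PTest f) w w 0
| reach_refl a w : reach (PStar a) w w 0
| reach_iter a w v u m n :
    reach a w v m -> reach (PStar a) v u n -> reach (PStar a) w u (S (m + n)).

Scheme refute_mut := Induction for refute Sort Prop
with reach_mut := Induction for reach Sort Prop.
Combined Scheme refute_reach_mut from refute_mut, reach_mut.

Lemma refute_reach_sound :
  (forall w f n, refute w f n -> ~ sat M w f) /\
  (forall a w v n, reach a w v n -> rel M a w v).
Proof.
  apply refute_reach_mut; simpl; try tauto.
  - intros w v a f m n _ Hwv _ Hv Hbox. exact (Hv (Hbox v Hwv)).
  - intros a b w v u m n _ Hwv _ Hvu. eauto.
  - intros a w. apply rt_refl.
  - intros a w v u m n _ Hwv _ Hvu. eapply rt_trans; [apply rt_step|]; eassumption.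
Qed.

Lemma refute_sound {w f n} : refute w f n -> ~ sat M w f.
Proof. exact (proj1 refute_reach_sound w f n). Qed.

Lemma reach_sound {a w v n} : reach a w v n -> rel M a w v.
Proof. exact (proj2 refute_reach_sound a w v n). Qed.

Scheme form_mut := Induction for form Sort Prop
with prog_mut := Induction for prog Sort Prop.

Lemma refute_complete {f w} : ~ sat M w f -> exists n, refute w f n.
Proof.
  revert f w.
  apply (@form_mut P A (fun f => forall w, ~ sat M w f -> exists n, refute w f n)
           (fun a => forall w v, rel M a w v -> exists n, reach a w v n));
    simpl.
  - eexists; constructor.
  - eexists; constructor; assumption.
  - intros f _ g IHg w Hfg.
    destruct (classic (sat M w f)) as [Hf|Hf]; [|tauto].
    destruct (IHg w) as [n Hn]; [tauto|].
    eexists; constructor; eassumption.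
  - intros a IHa f IHf w Hbox.
    apply not_all_ex_not in Hbox. destruct Hbox as [v Hv].
    apply imply_to_and in Hv. destruct Hv as [Hr Hs].
    destruct (IHa w v Hr) as [m Hm]. destruct (IHf v Hs) as [n Hn].
    eexists; econstructor; eassumption.
  - eexists; constructor; assumption.
  - intros a IHa b IHb w u [v [Hv Hu]].
    destruct (IHa w v Hv) as [m Hm]. destruct (IHb v u Hu) as [n Hn].
    eexists; econstructor; eassumption.
  - intros a IHa b IHb w v [Hv|Hv].
    + destruct (IHa w v Hv) as [n Hn]. eexists; apply reach_cupl; eassumption.
    + destruct (IHb w v Hv) as [n Hn]. eexists; apply reach_cupr; eassumption.
  - intros a IHa w v Hwv. apply clos_rt_rt1n in Hwv.
    induction Hwv as [w|w u v Hwu _ [n Hn]].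
    + eexists; apply reach_refl.
    + destruct (IHa w u Hwu) as [m Hm]. eexists; eapply reach_iter; eassumption.
  - intros f _ w v [<- Hf]. eexists; constructor; assumption.
Qed.

Definition least_refutation w f n : Prop :=
  refute w f n /\ forall m, refute w f m -> n <= m.

(* Only meaningful when [f] fails at [w]; otherwise an arbitrary number. *)
Definition rank w f : nat := epsilon (inhabits 0) (least_refutation w f).

Lemma rank_spec {w f n} : refute w f n -> least_refutation w f (rank w f).
Proof.
  intro Hn. unfold rank. apply epsilon_spec.
  destruct (dec_inh_nat_subset_has_unique_least_element (refute w f))
    as [k [Hk _]]; [intro; apply classic | eauto |].
  exists k. exact Hk.
Qed.

Lemma rank_le {w f n} : refute w f n -> rank w f <= n.
Proof. intro Hn. exact (proj2 (rank_spec Hn) n Hn). Qed.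

Lemma refute_rank {w f} : ~ sat M w f -> refute w f (rank w f).
Proof.
  intro Hf. destruct (refute_complete Hf) as [n Hn]. exact (proj1 (rank_spec Hn)).
Qed.

Lemma refute_imp_inv {w f g k} : refute w (Imp f g) k -> sat M w f /\ refute w g k.
Proof. intro H. inversion H; subst. auto. Qed.

Lemma refute_box_inv {w a f k} :
  refute w (Box a f) k -> exists v n, rel M a w v /\ refute v f n /\ n <= k.
Proof.
  intro H. inversion H; subst.
  exists v, n. split; [eapply reach_sound; eassumption|]. split; [assumption | lia].
Qed.

Lemma refute_box_seq_inv {w a b f k} :
  refute w (Box (PSeq a b) f) k -> refute w (Box a (Box b f)) k.
Proof.
  intro H. inversion H as [| | |? v ? ? m n Hr Hf]; subst.
  inversion Hr; subst. rewrite <- Nat.add_assoc. repeat (econstructor; eauto).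
Qed.

Lemma refute_box_cup_inv {w a b f k} :
  refute w (Box (PCup a b) f) k -> refute w (Box a f) k \/ refute w (Box b f) k.
Proof.
  intro H. inversion H as [| | |? v ? ? m n Hr Hf]; subst.
  inversion Hr; subst; [left|right]; econstructor; eassumption.
Qed.

Lemma refute_box_test_inv {w f g k} :
  refute w (Box (PTest f) g) k -> sat M w f /\ refute w g k.
Proof.
  intro H. inversion H as [| | |? v ? ? m n Hr Hf]; subst.
  inversion Hr; subst. auto.
Qed.

Lemma refute_box_star_inv {w a f k} :
  refute w (Box (PStar a) f) k ->
  refute w f k \/ exists k', k' < k /\ refute w (Box a (Box (PStar a) f)) k'.
Proof.
  intro H. inversion H as [| | |? v ? ? m n Hr Hf]; subst.
  inversion Hr; subst; [left; assumption | right].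
  eexists; split; [|econstructor; [eassumption | econstructor; eassumption]]. lia.
Qed.

Lemma sat_box_seq w a b f :
  sat M w (Box (PSeq a b) f) -> sat M w (Box a (Box b f)).
Proof. simpl. eauto. Qed.

Lemma sat_box_cup w a b f :
  sat M w (Box (PCup a b) f) -> sat M w (Box a f) /\ sat M w (Box b f).
Proof. simpl. auto. Qed.

Lemma sat_box_star w a f :
  sat M w (Box (PStar a) f) -> sat M w f /\ sat M w (Box a (Box (PStar a) f)).
Proof.
  simpl. intro H. split; [apply H, rt_refl|].
  intros v Hv u Hu. apply H. eapply rt_trans; [apply rt_step|]; eassumption.
Qed.

Lemma sat_box_test w f g : sat M w (Box (PTest f) g) -> sat M w f -> sat M w g.
Proof. simpl. auto. Qed.

Definition falsifies w (s : sequent P A) : Prop :=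
  (forall f, In f (ant s) -> sat M w f) /\ (forall f, In f (suc s) -> ~ sat M w f).

Lemma falsifies_seq_eq {w s t} : seq_eq s t -> falsifies w s -> falsifies w t.
Proof.
  intros [Hant Hsuc] [Ha Hs].
  split; intros f Hf; [apply Ha, Hant | apply Hs, Hsuc]; exact Hf.
Qed.

Lemma falsifies_ant_cons w f G D :
  falsifies w (Sq (f :: G) D) <-> sat M w f /\ falsifies w (Sq G D).
Proof.
  unfold falsifies; simpl. split.
  - intros [Ha Hs]. auto.
  - intros [Hf [Ha Hs]]. split; [intros g [<-|Hg]|]; auto.
Qed.

Lemma falsifies_suc_cons w f G D :
  falsifies w (Sq G (f :: D)) <-> ~ sat M w f /\ falsifies w (Sq G D).
Proof.
  unfold falsifies; simpl. split.
  - intros [Ha Hs]. auto.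
  - intros [Hf [Ha Hs]]. split; [|intros g [<-|Hg]]; auto.
Qed.

Lemma falsifies_incl w G D G' D' :
  incl G G' -> incl D D' -> falsifies w (Sq G' D') -> falsifies w (Sq G D).
Proof. intros HG HD [Ha Hs]. split; simpl; auto. Qed.

Definition descends (r : rule P A) (j : nat) (w w' : world M) : Prop :=
  forall t t', tstep r j t t' ->
    rank w' t' <= rank w t /\ (progress r j t t' -> rank w' t' < rank w t).

Definition falsified_premise (r : rule P A) (ps : list (sequent P A)) w : Prop :=
  exists j p w', nth_error ps j = Some p /\ falsifies w' p /\ descends r j w w'.

Lemma side_premise {r ps} j {p w} :
  (forall t t', tstep r j t t' -> t' = t) -> (forall a f, r <> RCs a f) ->
  nth_error ps j = Some p -> falsifies w p -> falsified_premise r ps w.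
Proof.
  intros Hid Hr Hj Hp. exists j, p, w. split; [exact Hj|split; [exact Hp|]].
  intros t t' Htt'. rewrite (Hid t t' Htt'). split; [lia|].
  intros [a [f [Heq _]]]. exfalso. exact (Hr a f Heq).
Qed.

Lemma principal_premise {r ps} j G D pr {c n w} :
  refute w c n -> n <= rank w pr ->
  (forall t t', tstep r j t t' -> t' = t \/ (t = pr /\ t' = c)) ->
  (forall t t', progress r j t t' -> t = pr /\ t' = c /\ n < rank w pr) ->
  nth_error ps j = Some (Sq G (c :: D)) -> falsifies w (Sq G D) ->
  falsified_premise r ps w.
Proof.
  intros Hc Hn Hst Hpr Hj HGD.
  assert (Hcn := rank_le Hc).
  exists j, (Sq G (c :: D)), w. split; [exact Hj|split].
  - apply falsifies_suc_cons. split; [eapply refute_sound; eassumption | exact HGD].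
  - intros t t' Htt'. split.
    + destruct (Hst t t' Htt') as [->|[-> ->]]; lia.
    + intro Hp. destruct (Hpr t t' Hp) as [-> [-> Hlt]]. lia.
Qed.

Ltac no_progress :=
  intros; match goal with H : progress _ _ _ _ |- _ => destruct H as [? [? [? _]]] end;
  discriminate.

Lemma impR_premise G D f g w :
  falsifies w (Sq G (Imp f g :: D)) ->
  falsified_premise (RImpR f g) [Sq (f :: G) (g :: D)] w.
Proof.
  intro H. apply falsifies_suc_cons in H as [Hfg HGD].
  destruct (refute_imp_inv (refute_rank Hfg)) as [Hf Hg].
  apply (principal_premise 0 (f :: G) D (Imp f g) Hg);
    simpl; auto; [no_progress | apply falsifies_ant_cons; auto].
Qed.

Lemma seqR_premise G D a b f w :
  falsifies w (Sq G (Box (PSeq a b) f :: D)) ->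
  falsified_premise (RSeqR a b f) [Sq G (Box a (Box b f) :: D)] w.
Proof.
  intro H. apply falsifies_suc_cons in H as [Hab HGD].
  apply (principal_premise 0 G D (Box (PSeq a b) f)
           (refute_box_seq_inv (refute_rank Hab))); simpl; auto. no_progress.
Qed.

Lemma cupR_premise G D a b f w :
  falsifies w (Sq G (Box (PCup a b) f :: D)) ->
  falsified_premise (RCupR a b f) [Sq G (Box a f :: D); Sq G (Box b f :: D)] w.
Proof.
  intro H. apply falsifies_suc_cons in H as [Hab HGD].
  destruct (refute_box_cup_inv (refute_rank Hab)) as [Ha|Hb].
  - apply (principal_premise 0 G D (Box (PCup a b) f) Ha);
      simpl; auto; [|no_progress].
    intros t t' [->|[-> [[_ ->]|[Hj _]]]]; [auto | auto | discriminate].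
  - apply (principal_premise 1 G D (Box (PCup a b) f) Hb);
      simpl; auto; [|no_progress].
    intros t t' [->|[-> [[Hj _]|[_ ->]]]]; [auto | discriminate | auto].
Qed.

Lemma testR_premise G D f g w :
  falsifies w (Sq G (Box (PTest f) g :: D)) ->
  falsified_premise (RTestR f g) [Sq (f :: G) (g :: D)] w.
Proof.
  intro H. apply falsifies_suc_cons in H as [Hfg HGD].
  destruct (refute_box_test_inv (refute_rank Hfg)) as [Hf Hg].
  apply (principal_premise 0 (f :: G) D (Box (PTest f) g) Hg);
    simpl; auto; [no_progress | apply falsifies_ant_cons; auto].
Qed.

Lemma cs_premise G D a f w :
  falsifies w (Sq G (Box (PStar a) f :: D)) ->
  falsified_premise (RCs a f) [Sq G (f :: D); Sq G (Box a (Box (PStar a) f) :: D)] w.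
Proof.
  intro H. apply falsifies_suc_cons in H as [Hstar HGD].
  destruct (refute_box_star_inv (refute_rank Hstar)) as [Hf|[k [Hk Hunfold]]].
  - apply (principal_premise 0 G D (Box (PStar a) f) Hf);
      simpl; auto.
    + intros t t' [->|[-> [[_ ->]|[Hj _]]]]; [auto | auto | discriminate].
    + intros ? ? [? [? [_ [Hj _]]]]; discriminate.
  - apply (principal_premise 1 G D (Box (PStar a) f) Hunfold);
      simpl; auto; [lia| |].
    + intros t t' [->|[-> [[Hj _]|[_ ->]]]]; [auto | discriminate | auto].
    + intros t t' [a' [f' [Heq [_ [-> ->]]]]]. injection Heq as -> ->. auto.
Qed.

Lemma K_premise G G' D a f w :
  falsifies w (Sq (G' ++ map (Box a) G) (Box a f :: D)) ->
  falsified_premise (RK a f) [Sq G [f]] w.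
Proof.
  intro H. apply falsifies_suc_cons in H as [Haf [Hant _]].
  destruct (refute_box_inv (refute_rank Haf)) as [v [n [Hwv [Hf Hn]]]].
  exists 0, (Sq G [f]), v. split; [reflexivity|split; [split|]].
  - intros g Hg. apply (Hant (Box a g)); [|exact Hwv].
    apply in_or_app. right. apply in_map. exact Hg.
  - intros g [<-|[]]. eapply refute_sound; eassumption.
  - intros t t' [-> ->]. split; [|no_progress]. pose proof (rank_le Hf). lia.
Qed.

Ltac by_side_premise j :=
  eapply (side_premise j); [simpl; auto | intros ? ? ?; discriminate | reflexivity |].

Lemma inst0_falsified_premise {r ps c w} :
  inst0 r ps c -> falsifies w c -> falsified_premise r ps w.
Proof.
  intros Hi Hc. destruct Hi as [G D f Hf Hf'| | | | | | | | | | | | | |].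
  - exfalso. destruct Hc as [Ha Hs]. exact (Hs f Hf' (Ha f Hf)).
  - exfalso. exact (proj1 Hc Bot (or_introl eq_refl)).
  - apply falsifies_ant_cons in Hc as [Hfg HGD].
    destruct (classic (sat M w f)) as [Hf|Hf].
    + by_side_premise 1. apply falsifies_ant_cons. auto.
    + by_side_premise 0. apply falsifies_suc_cons. auto.
  - apply impR_premise. exact Hc.
  - by_side_premise 0. eapply falsifies_incl; eassumption.
  - destruct (classic (sat M w f)) as [Hf|Hf].
    + by_side_premise 1. apply falsifies_ant_cons. auto.
    + by_side_premise 0. apply falsifies_suc_cons. auto.
  - eapply K_premise. exact Hc.
  - apply falsifies_ant_cons in Hc as [Hab HGD].
    by_side_premise 0. apply falsifies_ant_cons. auto using sat_box_seq.
  - apply seqR_premise. exact Hc.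
  - apply falsifies_ant_cons in Hc as [Hab HGD]. apply sat_box_cup in Hab as [Ha Hb].
    by_side_premise 0. apply falsifies_ant_cons. split; [|apply falsifies_ant_cons]; auto.
  - apply cupR_premise. exact Hc.
  - apply falsifies_ant_cons in Hc as [Hstar HGD]. apply sat_box_star in Hstar as [Hf Hunfold].
    by_side_premise 0. apply falsifies_ant_cons. split; [|apply falsifies_ant_cons]; auto.
  - apply falsifies_ant_cons in Hc as [Hfg HGD].
    destruct (classic (sat M w f)) as [Hf|Hf].
    + by_side_premise 1. apply falsifies_ant_cons. eauto using sat_box_test.
    + by_side_premise 0. apply falsifies_suc_cons. auto.
  - apply testR_premise. exact Hc.
  - apply cs_premise. exact Hc.
Qed.

Lemma inst_falsified_premise {r ps c w} :
  inst r ps c -> falsifies w c -> falsified_premise r ps w.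
Proof.
  intros [ps' [c' [Hps [Hc Hi]]]] Hw.
  destruct (inst0_falsified_premise Hi (falsifies_seq_eq Hc Hw))
    as [j [p' [w' [Hj [Hp' Hdesc]]]]].
  destruct (Forall2_nth_error_r Hps Hj) as [p [Hp Hpp']].
  exists j, p, w'. split; [exact Hp|split; [|exact Hdesc]].
  exact (falsifies_seq_eq (seq_eq_sym Hpp') Hp').
Qed.

Lemma progress_tstep {r : rule P A} {j t t'} : progress r j t t' -> tstep r j t t'.
Proof. intros [a [f [-> [-> [-> ->]]]]]. simpl. auto. Qed.

Lemma subtree_app {T t : ptree P A} {a} b :
  subtree T a = Some t -> subtree T (a ++ b) = subtree t b.
Proof.
  revert T. induction a as [|j a IH]; intros T H; simpl in *.
  - injection H as ->. reflexivity.
  - destruct T as [s r ch|]; [|discriminate].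
    destruct (nth_error ch j); [apply IH; exact H | discriminate].
Qed.

Definition falsified_node (T : ptree P A) (x : list nat * world M) : Prop :=
  exists s r ch, subtree T (fst x) = Some (PNode s r ch) /\ falsifies (snd x) s.

Definition falsifying_step (T : ptree P A) (x : list nat * world M) j y : Prop :=
  dstep T (fst x) j (fst y) /\
  forall r, node_rule T (fst x) r -> descends r j (snd x) (snd y).

Lemma root_falsified {T s w} :
  preproof T -> seq_eq (label T) s -> falsifies w s -> falsified_node T ([], w).
Proof.
  intros [_ Hbud] Hroot Hw. destruct T as [s0 r0 ch0|s0 c0].
  - exists s0, r0, ch0. split; [reflexivity|].
    exact (falsifies_seq_eq (seq_eq_sym Hroot) Hw).
  - exfalso. destruct (Hbud [] s0 c0 eq_refl) as [s' [r' [ch' [Hc _]]]].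
    destruct c0; discriminate.
Qed.

Lemma falsified_node_step {T} : preproof T ->
  forall x, falsified_node T x -> exists j y, falsifying_step T x j y /\ falsified_node T y.
Proof.
  intros [Hinst Hbud] [a w] [s [r [ch [Ha Hw]]]]. simpl in *.
  destruct (inst_falsified_premise (Hinst _ _ _ _ Ha) Hw) as [j [p [w' [Hj [Hp Hdesc]]]]].
  rewrite nth_error_map in Hj.
  destruct (nth_error ch j) as [child|] eqn:Hch; [injection Hj as <- | discriminate].
  assert (Hchild : subtree T (a ++ [j]) = Some child).
  { rewrite (subtree_app _ Ha). simpl. rewrite Hch. reflexivity. }
  assert (Hrule : forall r', node_rule T a r' -> descends r' j w w').
  { intros r' [s' [ch' Ha']]. rewrite Ha in Ha'. injection Ha' as _ <- _. exact Hdesc. }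
  destruct child as [s1 r1 ch1|s1 c].
  - exists j, (a ++ [j], w'). split; [split|].
    + exists s, r, ch, (PNode s1 r1 ch1). auto.
    + exact Hrule.
    + exists s1, r1, ch1. auto.
  - destruct (Hbud _ _ _ Hchild) as [s' [r' [ch' [Hc [_ Hs1]]]]].
    exists j, (c, w'). split; [split|].
    + exists s, r, ch, (PBud s1 c). auto.
    + exact Hrule.
    + exists s', r', ch'. split; [exact Hc|]. exact (falsifies_seq_eq Hs1 Hp).
Qed.

End Soundness.

Theorem mainTheorem10 (P A : Type) (s : sequent P A) :
  provable s -> valid s.
Proof.
  intros [T [[Hpre Hpaths] Hroot]] M w0 Hant.
  apply NNPP. intro Hsuc.
  assert (Hw0 : falsifies M w0 s).
  { split; [exact Hant|]. intros f Hf Hsat. apply Hsuc. eauto. }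
  destruct (infinite_run (root_falsified M Hpre Hroot Hw0) (falsified_node_step M Hpre))
    as [p [js Hrun]].
  destruct (Hpaths (fun i => fst (p i)) js (fun i => proj1 (Hrun i)))
    as [n [tau [_ [Hstep Hprogress]]]].
  apply (nat_sequence_no_infinite_descent (fun i => rank M (snd (p i)) (tau i)) n).
  - intros i Hi. destruct (Hstep i Hi) as [r [Hr Hst]].
    exact (proj1 (proj2 (Hrun i) r Hr _ _ Hst)).
  - intro m. destruct (Hprogress m) as [k [Hmk [Hnk [r [Hr Hp]]]]].
    exists k. split; [exact Hmk|split; [exact Hnk|]].
    exact (proj2 (proj2 (Hrun k) r Hr _ _ (progress_tstep Hp)) Hp).
Qed.
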